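(* Consider the optimal clique cover delivery problem for a system with $K$ users and a given set $\mathcal{W}$ of subfiles to be delivered, and let $\mathscr{P}$ be the set of all cliques (feasible packets) that can be formed from $\mathcal{W}$. Run the following greedy algorithm with input $\mathcal{W}$ and $\mathscr{P}$: set $\mathscr{C}=\emptyset$, $\mathcal{E}=\mathcal{W}$, $\mathscr{S}=\mathscr{P}$; while $\mathcal{E}\neq\emptyset$: choose $\mathcal{P}^*\in\arg\max_{\mathcal{P}\in\mathscr{S}} |\mathcal{P}|/\|\mathcal{P}\|$ (ties broken arbitrarily), set $\mathscr{C}=\mathscr{C}\cup\{\mathcal{P}^*\}$, set $\mathcal{E}=\mathcal{E}\setminus\mathcal{P}^*$, and remove from $\mathscr{S}$ every $\mathcal{S}\in\mathscr{S}$ with $\mathcal{S}\cap\mathcal{P}^*\neq\emptyset$; output $\mathscr{C}$. Then this algorithm achieves a $(1+\log K)$-approximation to the optimal clique cover delivery problem, i.e., $\mathscr{C}$ is a set of cliques covering $\mathcal{W}$ and $\sum_{\mathcal{P}\in\mathscr{C}}\|\mathcal{P}\|\le(1+\log K)\cdot\mathrm{OPT}$, where $\mathrm{OPT}$ is the optimal value of the problem.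
   Context: Setting: a server and $K$ users, $[K]=\{1,\dots,K\}$; user $k$ requests file $W_k$. For $k\in[K]$ and $\mathcal{A}\subseteq[K]\setminus\{k\}$, $W_{k,\mathcal{A}}$ denotes the subfile of $W_k$ consisting of the bits cached exactly by the users in $\mathcal{A}$, and $\|W_{k,\mathcal{A}}\|$ is its size in bits (a nonnegative integer). The set of subfiles to be delivered is $\mathcal{W}=\{W_{k,\mathcal{A}}: k\in[K],\ \mathcal{A}\subseteq[K]\setminus\{k\},\ \|W_{k,\mathcal{A}}\|\neq 0\}$ (the sizes may be arbitrary). A clique (feasible packet) is a nonempty set $\mathcal{P}\subseteq\mathcal{W}$ of the form $\{W_{k,\mathcal{A}_k}: k\in\mathcal{M}\}$ for some $\mathcal{M}\subseteq[K]$ (at most one subfile per user) such that $k\in\mathcal{A}_{k'}$ for all distinct $k,k'\in\mathcal{M}$; equivalently, a clique of the side-information graph on vertex set $\mathcal{W}$ in which $W_{k,\mathcal{A}}$ and $W_{l,\mathcal{B}}$ ($k\neq l$) are adjacent iff $l\in\mathcal{A}$ and $k\in\mathcal{B}$. The size of a clique is $\|\mathcal{P}\|=\max_{W\in\mathcal{P}}\|W\|$, and $|\mathcal{P}|$ is its number of subfiles. The optimal clique cover delivery problem: choose a set of cliques whose union is $\mathcal{W}$ minimizing the sum of their sizes. *)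

From Stdlib Require Export Reals.
From mathcomp Require Export all_boot.
Set Implicit Arguments. Unset Strict Implicit. Unset Printing Implicit Defensive.

Section CliqueCover.
Variable K : nat.
(* size k A = ||W_{k,A}|| in bits *)
Variable size : 'I_K -> {set 'I_K} -> nat.

(* A (potential) subfile W_{k,A} is represented by the pair (k, A). *)
Definition subfile := ('I_K * {set 'I_K})%type.

Definition Wset : {set subfile} :=
  [set x : subfile | (x.1 \notin x.2) && (size x.1 x.2 != 0)].

Definition clique (P : {set subfile}) : bool :=
  [&& P != set0, P \subset Wset &
   [forall x in P, forall y in P,
      (x != y) ==> [&& x.1 != y.1, x.1 \in y.2 & y.1 \in x.2]]].

Definition csize (P : {set subfile}) : nat := \max_(x in P) size x.1 x.2.

Definition ratio (P : {set subfile}) : R := Rdiv (INR #|P|) (INR (csize P)).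

Definition cost (C : {set {set subfile}}) : nat := \sum_(P in C) csize P.

Definition clique_cover (C : {set {set subfile}}) : Prop :=
  (forall P, P \in C -> clique P) /\ \bigcup_(P in C) P = Wset.

(* Algorithm state after having chosen the cliques in [prev]:
   E = W minus everything covered so far,
   S = all cliques that intersect none of the chosen cliques. *)
Definition remaining (prev : seq {set subfile}) : {set subfile} :=
  Wset :\: \bigcup_(P <- prev) P.

Definition avail (prev : seq {set subfile}) : {set {set subfile}} :=
  [set Q | clique Q & all (fun P : {set subfile} => [disjoint Q & P]) prev].

(* [greedy_from prev s]: starting from the state reached after choosing
   [prev], the greedy algorithm (with some tie-breaking) chooses exactly
   the cliques of [s], in this order, and then stops. *)
Fixpoint greedy_from (prev : seq {set subfile}) (s : seq {set subfile}) : Prop :=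
  match s with
  | [::] => remaining prev = set0
  | P :: s' =>
      remaining prev != set0 /\
      P \in avail prev /\
      (forall Q, Q \in avail prev -> Rle (ratio Q) (ratio P)) /\
      greedy_from (rcons prev P) s'
  end.

Definition greedy_run (s : seq {set subfile}) : Prop := greedy_from [::] s.

Definition greedy_output (s : seq {set subfile}) : {set {set subfile}} :=
  [set P in s].

End CliqueCover.

From Stdlib Require Import Lra.
From mathcomp Require Import order ssralg ssrnum Rstruct.
Import Order.TTheory GRing.Theory Num.Theory.

Set Implicit Arguments.
Unset Strict Implicit.
Unset Printing Implicit Defensive.

(* The classical charging argument for greedy set cover, adapted to cliques
   whose cost is the largest subfile they contain.  Give every clique Q of a
   cover D the potential ||Q|| H(|Q ∩ E|), where E is the set of subfiles not
   yet delivered and H is the harmonic number.  When the greedy algorithm picks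
   P, the part Q ∩ E is itself still an available clique, so maximality of
   |P|/||P|| gives ||P||/|P| <= ||Q|| / |Q ∩ E|.  Charging ||P||/|P| to each
   newly delivered subfile, the price paid for the subfiles of Q ∩ P is at most
   the drop of the potential of Q.  Hence the greedy cost is at most the initial
   potential, which is at most H(K) cost(D) because a clique contains at most
   one subfile per user, and H(K) <= 1 + ln K. *)

Local Open Scope R_scope.

(* Stdlib's [ln] is [0] on nonpositive arguments. *)
Lemma ln_0 : ln 0 = 0.
Proof. by rewrite /ln; case: Rlt_dec => // h; exfalso; lra. Qed.

Lemma ln_le_subr1 (y : R) : 0 < y -> ln y <= y - 1.
Proof. by move=> y0; have := exp_ineq1_le (ln y); rewrite exp_ln //; lra. Qed.

Lemma inv_le_ln_sub (a : R) : 1 < a -> / a <= ln a - ln (a - 1).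
Proof.
move=> a1.
have a0 : 0 < a by lra.
have -> : a - 1 = a * (1 - / a) by field; lra.
have ia1 : / a < 1 by rewrite -Rinv_1; apply: Rinv_lt_contravar; lra.
rewrite ln_mult //; last lra.
have /ln_le_subr1 : 0 < 1 - / a by lra.
lra.
Qed.

Lemma inv_INR_le_ln_sub n : / INR n.+2 <= ln (INR n.+2) - ln (INR n.+1).
Proof.
have h : 1 < INR n.+2 by rewrite !S_INR; have := pos_INR n; lra.
by have := inv_le_ln_sub h; rewrite (S_INR n.+1) Rplus_minus_r.
Qed.

Local Close Scope R_scope.
Local Open Scope ring_scope.

Section Harmonic.
Variable F : numFieldType.

Definition harmonic (n : nat) : F := \sum_(i < n) i.+1%:R^-1.

Lemma harmonic_ge0 n : 0 <= harmonic n.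
Proof. by apply: sumr_ge0 => i _; rewrite invr_ge0 ler0n. Qed.

Lemma harmonic_cat m n : (m <= n)%N ->
  harmonic n = harmonic m + \sum_(m <= i < n) i.+1%:R^-1.
Proof.
move=> mn; rewrite /harmonic -!(big_mkord xpredT (fun i => i.+1%:R^-1)).
exact: big_cat_nat.
Qed.

Lemma le_harmonic m n : (m <= n)%N -> harmonic m <= harmonic n.
Proof.
move=> mn; rewrite (harmonic_cat mn) lerDl.
by apply: sumr_ge0 => i _; rewrite invr_ge0 ler0n.
Qed.

Lemma harmonic_subn_ge r t : (t <= r)%N ->
  t%:R / r%:R <= harmonic r - harmonic (r - t).
Proof.
move=> tr; rewrite (harmonic_cat (leq_subr t r)) addrAC subrr add0r.
have -> : t%:R / r%:R = \sum_(r - t <= i < r) (r%:R : F)^-1.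
  by rewrite sumr_const_nat subKn // mulrC mulr_natr.
apply: ler_sum_nat => i /andP[_ ir].
by rewrite lef_pV2 ?posrE ?ltr0n ?ler_nat // (leq_ltn_trans _ ir).
Qed.

End Harmonic.

Lemma harmonic_le_1_ln n : harmonic R n <= 1 + ln n%:R.
Proof.
case: n => [|n]; first by rewrite /harmonic big_ord0 -INRE ln_0 addr0 ler01.
elim: n => [|n IH]; first by rewrite /harmonic big_ord1 -INRE ln_1 invr1 addr0.
rewrite /harmonic big_ord_recr -/(harmonic R n.+1).
have /RleP := inv_INR_le_ln_sub n; rewrite RminusE RinvE !INRE => step.
by apply: le_trans (lerD IH step) _; rewrite addrA addrAC addrK.
Qed.

Lemma card_le_sum_setI (T I : finType) (D : {pred I}) (F : I -> {set T})
    (A : {set T}) :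
  A \subset \bigcup_(i in D) F i -> (#|A| <= \sum_(i in D) #|F i :&: A|)%N.
Proof.
move=> AD; rewrite -sum1_card.
apply: (@leq_trans (\sum_(x in A) \sum_(i in D) (x \in F i))).
  apply: leq_sum => x xA.
  have /bigcupP[i Di xFi] := subsetP AD x xA.
  by rewrite (bigD1 i) //= xFi.
rewrite exchange_big /=; apply: leq_sum => i _.
rewrite -sum1_card big_mkcond [leqRHS]big_mkcond /=.
by apply: leq_sum => x _; rewrite !inE; case: (x \in A); case: (x \in F i).
Qed.

Section CliqueCover.
Variables (K : nat) (size : 'I_K -> {set 'I_K} -> nat).

Local Notation subfile := (subfile K).
Local Notation Wset := (Wset size).
Local Notation clique := (clique size).
Local Notation csize := (csize size).
Local Notation ratio := (ratio size).
Local Notation remaining := (remaining size).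
Local Notation avail := (avail size).
Local Notation greedy_from := (greedy_from size).

Implicit Types (x : subfile) (P Q E : {set subfile}) (D : {set {set subfile}}).
Implicit Types (prev s : seq {set subfile}).

Lemma clique_neq0 P : clique P -> P != set0.
Proof. by case/and3P. Qed.

Lemma clique_subset P Q : clique Q -> P \subset Q -> P != set0 -> clique P.
Proof.
move=> /and3P[_ QW /forall_inP cQ] PQ P0; apply/and3P; split=> //.
  exact: subset_trans QW.
apply/forall_inP=> x xP; apply/forall_inP=> y yP.
by have /forall_inP := cQ x (subsetP PQ x xP); apply; apply: (subsetP PQ).
Qed.

Lemma clique_set1 x : x \in Wset -> clique [set x].
Proof.
move=> xW; apply/and3P; split.
- by apply/set0Pn; exists x; rewrite inE.
- by rewrite sub1set.
- by apply/forall_inP=> y /set1P->; apply/forall_inP=> z /set1P->; rewrite eqxx.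
Qed.

Lemma csize_subset P Q : P \subset Q -> (csize P <= csize Q)%N.
Proof.
move=> PQ; apply/bigmax_leqP=> x xP.
by rewrite /csize (bigD1 x) ?(subsetP PQ x xP) //= leq_maxl.
Qed.

Lemma clique_csize_gt0 P : clique P -> (0 < csize P)%N.
Proof.
move=> /and3P[/set0Pn[x xP] PW _].
have := subsetP PW x xP; rewrite inE -lt0n => /andP[_ sx].
by apply: leq_trans sx _; rewrite /csize (bigD1 x) //= leq_maxl.
Qed.

(* Distinct subfiles of a clique belong to distinct users. *)
Lemma clique_card_le P : clique P -> (#|P| <= K)%N.
Proof.
move=> /and3P[_ _ /forall_inP cP].
have inj : {in P &, injective (fun x : subfile => x.1)}.
  move=> x y xP yP /= e; apply/eqP; apply: contraTT isT => nxy.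
  have /forall_inP/(_ y yP) := cP x xP.
  by rewrite nxy e eqxx.
rewrite -(card_in_imset inj); apply: leq_trans (max_card _) _.
by rewrite card_ord.
Qed.

Lemma remaining_nil : remaining [::] = Wset.
Proof. by rewrite /remaining big_nil setD0. Qed.

Lemma remaining_rcons prev P : remaining (rcons prev P) = remaining prev :\: P.
Proof. by rewrite /remaining -cats1 big_cat /= big_seq1 setDDl. Qed.

Lemma avail_clique prev P : P \in avail prev -> clique P.
Proof. by rewrite inE => /andP[]. Qed.

Lemma avail_subset prev P : P \in avail prev -> P \subset remaining prev.
Proof.
rewrite inE => /andP[/and3P[_ PW _] /allP disjP].
apply/subsetP=> x xP; rewrite inE (subsetP PW x xP) andbT bigcup_seq.
apply/bigcupP=> -[Q Qprev xQ].
by have := disjointFr (disjP Q Qprev) xP; rewrite xQ.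
Qed.

Lemma setI_remaining_avail prev Q :
  clique Q -> Q :&: remaining prev != set0 -> Q :&: remaining prev \in avail prev.
Proof.
move=> cQ QE0; rewrite inE (clique_subset cQ (subsetIl _ _) QE0) /=.
apply/allP=> P Pprev; rewrite -setI_eq0; apply/eqP/setP=> x; rewrite !inE.
apply/negP=> /andP[/and3P[_ + _] xP]; rewrite bigcup_seq => /bigcupP; apply.
by exists P.
Qed.

Lemma avail_set1 prev x : x \in remaining prev -> [set x] \in avail prev.
Proof.
move=> xE; have xW : x \in Wset by move: xE; rewrite inE => /andP[].
have -> : [set x] = [set x] :&: remaining prev by apply/esym/setIidPl; rewrite sub1set.
apply: setI_remaining_avail; first exact: clique_set1.
by apply/set0Pn; exists x; rewrite in_setI set11 xE.
Qed.

Lemma greedy_choice_exists prev : remaining prev != set0 ->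
  exists2 P, P \in avail prev & forall Q, Q \in avail prev -> Rle (ratio Q) (ratio P).
Proof.
case/set0Pn=> x /avail_set1 x_avail.
by case: (arg_maxP ratio x_avail) => P Pav Pmax; exists P => // Q /Pmax/RleP.
Qed.

Lemma card_remaining_rcons_lt prev P : P \in avail prev ->
  (#|remaining (rcons prev P)| < #|remaining prev|)%N.
Proof.
move=> Pav; have PE := avail_subset Pav.
have P0 : (0 < #|P|)%N by rewrite card_gt0 (clique_neq0 (avail_clique Pav)).
rewrite remaining_rcons cardsD (setIidPr PE) ltn_subrL P0.
exact: leq_trans P0 (subset_leq_card PE).
Qed.

Lemma greedy_from_exists prev : exists s, greedy_from prev s.
Proof.
have [n] := ubnP #|remaining prev|; elim: n prev => // n IH prev En.
have [E0|E0] := eqVneq (remaining prev) set0; first by exists [::].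
have [P Pav Pmax] := greedy_choice_exists E0.
have [|s run] := IH (rcons prev P).
  by apply: leq_trans (card_remaining_rcons_lt Pav) _; rewrite -ltnS.
by exists (P :: s).
Qed.

Lemma greedy_from_clique_subset prev s P : greedy_from prev s -> P \in s ->
  clique P /\ P \subset remaining prev.
Proof.
elim: s prev => [//|P' s IH] prev /= [_ [P'av [_ run]]].
rewrite inE => /predU1P[->|Ps].
  by split; [exact: avail_clique P'av | exact: avail_subset].
have [cP] := IH _ run Ps; rewrite remaining_rcons => /subset_trans PE.
by split=> //; apply/PE/subsetDl.
Qed.

Lemma greedy_from_uniq prev s : greedy_from prev s -> uniq s.
Proof.
elim: s prev => [//|P s IH] prev /= [_ [_ [_ run]]].
rewrite (IH _ run) andbT; apply/negP=> /(greedy_from_clique_subset run)[cP].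
rewrite remaining_rcons => /subsetP PE.
by case/set0Pn: (clique_neq0 cP) => x xP; have := PE x xP; rewrite inE xP.
Qed.

Lemma greedy_from_cover prev s : greedy_from prev s ->
  remaining prev \subset \bigcup_(P <- s) P.
Proof.
elim: s prev => [|P s IH] prev /=; first by move->; rewrite sub0set.
by case=> _ [_ [_ /IH]]; rewrite remaining_rcons big_cons subDset.
Qed.

Lemma greedy_run_cover s : greedy_run size s -> clique_cover size (greedy_output s).
Proof.
move=> run; split=> [P|].
  by rewrite inE => /(greedy_from_clique_subset run)[].
apply/eqP; rewrite eqEsubset; apply/andP; split.
  apply/bigcupsP=> P; rewrite inE => /(greedy_from_clique_subset run)[_].
  by rewrite remaining_nil.
rewrite -remaining_nil (subset_trans (greedy_from_cover run)) // bigcup_seq.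
by apply/bigcupsP=> P Ps; apply: bigcup_sup; rewrite inE.
Qed.

Lemma greedy_run_cost s : greedy_run size s ->
  cost size (greedy_output s) = (\sum_(P <- s) csize P)%N.
Proof.
move=> /greedy_from_uniq s_uniq; rewrite /cost big_uniq //.
by apply: eq_bigl => P; rewrite inE.
Qed.

Definition potential D E : R :=
  \sum_(Q in D) (csize Q)%:R * harmonic R #|Q :&: E|.

Lemma potential_ge0 D E : 0 <= potential D E.
Proof. by apply: sumr_ge0 => Q _; rewrite mulr_ge0 ?ler0n ?harmonic_ge0. Qed.

Lemma potential_le D E : (forall Q, Q \in D -> clique Q) ->
  potential D E <= harmonic R K * (cost size D)%:R.
Proof.
move=> cD; rewrite /cost natr_sum mulr_sumr; apply: ler_sum => Q QD.
rewrite mulrC ler_wpM2r ?ler0n // le_harmonic //.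
exact: leq_trans (subset_leq_card (subsetIl _ _)) (clique_card_le (cD Q QD)).
Qed.

Section GreedyStep.
Variables (prev : seq {set subfile}) (P : {set subfile}).
Hypothesis P_avail : P \in avail prev.
Hypothesis P_max : forall Q, Q \in avail prev -> Rle (ratio Q) (ratio P).

Local Notation E := (remaining prev).

Lemma greedy_price_le Q : clique Q -> Q :&: E != set0 ->
  (csize P)%:R / #|P|%:R <= (csize Q)%:R / #|Q :&: E|%:R :> R.
Proof.
move=> cQ QE0; have QE_avail := setI_remaining_avail cQ QE0.
have ratio_gt0 C : clique C -> 0 < #|C|%:R / (csize C)%:R :> R.
  by move=> cC; rewrite divr_gt0 ?ltr0n ?card_gt0 ?clique_neq0 ?clique_csize_gt0.
have /RleP := P_max QE_avail; rewrite /ratio !RdivE !INRE => le_ratio.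
apply: le_trans (_ : _ <= (csize (Q :&: E))%:R / #|Q :&: E|%:R) _.
  by rewrite -[leLHS]invf_div -[leRHS]invf_div lef_pV2 ?posrE ?ratio_gt0
    ?(avail_clique P_avail) ?(avail_clique QE_avail).
by rewrite ler_wpM2r ?invr_ge0 ?ler0n // ler_nat csize_subset ?subsetIl.
Qed.

Lemma greedy_charge_le Q : clique Q ->
  #|Q :&: P|%:R * ((csize P)%:R / #|P|%:R) <=
  (csize Q)%:R * (harmonic R #|Q :&: E| - harmonic R #|Q :&: (E :\: P)|).
Proof.
move=> cQ; have PE := avail_subset P_avail.
have card_QEP : #|Q :&: (E :\: P)| = (#|Q :&: E| - #|Q :&: P|)%N.
  by rewrite setIDA cardsD -setIA (setIidPr PE).
have QP_QE : (#|Q :&: P| <= #|Q :&: E|)%N by apply/subset_leq_card/setIS.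
rewrite card_QEP; have [->|QP0] := posnP #|Q :&: P|.
  by rewrite mul0r subn0 subrr mulr0.
have QE0 : Q :&: E != set0 by rewrite -card_gt0 (leq_trans QP0 QP_QE).
apply: le_trans (_ : _ <= #|Q :&: P|%:R * ((csize Q)%:R / #|Q :&: E|%:R)) _.
  by rewrite ler_wpM2l ?ler0n ?greedy_price_le.
by rewrite mulrCA ler_wpM2l ?ler0n ?harmonic_subn_ge.
Qed.

Lemma greedy_potential_drop D : (forall Q, Q \in D -> clique Q) ->
  E \subset \bigcup_(Q in D) Q ->
  (csize P)%:R <= potential D E - potential D (E :\: P).
Proof.
move=> cD cov; rewrite /potential -sumrB.
have P0 : (0 < #|P|)%N by rewrite card_gt0 (clique_neq0 (avail_clique P_avail)).
apply: le_trans (_ : _ <= \sum_(Q in D) #|Q :&: P|%:R * ((csize P)%:R / #|P|%:R)) _.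
  apply: le_trans (_ : _ <= #|P|%:R * ((csize P)%:R / #|P|%:R)) _.
    by rewrite mulrCA divff ?mulr1 // pnatr_eq0 -lt0n.
  rewrite -mulr_suml -natr_sum ler_wpM2r ?divr_ge0 ?ler0n // ler_nat.
  exact/card_le_sum_setI/(subset_trans (avail_subset P_avail)).
by apply: ler_sum => Q QD; rewrite -mulrBr greedy_charge_le ?cD.
Qed.

End GreedyStep.

Lemma greedy_cost_le_potential prev s D : greedy_from prev s ->
  (forall Q, Q \in D -> clique Q) -> remaining prev \subset \bigcup_(Q in D) Q ->
  (\sum_(P <- s) csize P)%:R <= potential D (remaining prev).
Proof.
elim: s prev => [|P s IH] prev /=; first by rewrite big_nil potential_ge0.
case=> _ [P_avail [P_max run]] cD cov.
have := IH _ run cD; rewrite remaining_rcons.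
move=> /(_ (subset_trans (subsetDl _ _) cov)) IHs.
rewrite big_cons natrD -[potential D _](subrK (potential D (remaining prev :\: P))).
exact: lerD (greedy_potential_drop P_avail P_max cD cov) IHs.
Qed.

End CliqueCover.

Theorem lemma1 (K : nat) (size : 'I_K -> {set 'I_K} -> nat) :
  (exists s, greedy_run size s) /\
  forall s, greedy_run size s ->
    clique_cover size (greedy_output s) /\
    forall D, clique_cover size D ->
      Rle (INR (cost size (greedy_output s)))
          (Rmult (Rplus 1 (ln (INR K))) (INR (cost size D))).
Proof.
split; first exact: greedy_from_exists.
move=> s run; split; first exact: greedy_run_cover.
move=> D [cD covD]; apply/RleP.
rewrite greedy_run_cost // !INRE RmultE RplusE R1E.
have cov : remaining size [::] \subset \bigcup_(Q in D) Q by rewrite remaining_nil covD.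
apply: le_trans (greedy_cost_le_potential run cD cov) _.
apply: le_trans (potential_le _ cD) _.
by rewrite ler_wpM2r ?ler0n ?harmonic_le_1_ln.
Qed.
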